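(* Let $1<S\le N$, $L$ a band-width vector, $\dot W$ an $L$-admissible matrix, $W_\varepsilon=\mathrm{Id}+\varepsilon\dot W$, $k\in\mathbb N$, $\beta\in\Gamma$, $D_\beta=D_{k,\beta,L}$, $P_{\varepsilon,\beta}=D_\beta W_\varepsilon$. Fix $\ell\in\{1,\dots,N\}$ and $s_\ell$ with $\ell\in B_{s_\ell}$. Suppose that for $0<\varepsilon<\gamma$, $f^{(\ell)}_\varepsilon$ is a unit-norm eigenvector of $P_{\varepsilon,\beta}$ with eigenvalue $\lambda^{(\ell)}_\varepsilon$, that $\lambda^{(\ell)}_\varepsilon\to e^{-2\pi ik\beta_{s_\ell}}$, and that $f^{(\ell)}_\varepsilon\to f^{(\ell)}$ as $\varepsilon\to0$, where $f^{(\ell)}$ is a unit eigenvector of $\hat P_\beta=D_\beta\hat W_L$. Then for every $j\in\{1,\dots,N\}\setminus B_{s_\ell}$, with $s_j$ such that $j\in B_{s_j}$, $$\lim_{\varepsilon\to0}\frac{(f^{(\ell)}_\varepsilon)_j-(f^{(\ell)})_j}{\varepsilon}=\lim_{\varepsilon\to0}\frac{(f^{(\ell)}_\varepsilon)_j}{\varepsilon}=\frac{1}{e^{-2\pi ik\beta_{s_\ell}}-e^{-2\pi ik\beta_{s_j}}}\bigl(D_\beta\dot Wf^{(\ell)}\bigr)_j.$$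
   Context: A band-width vector is $L=(L_1,\dots,L_S)$ of positive integers with $\sum_sL_s=N$; $N_0=0$, $N_s=N_{s-1}+L_s$, $B_s=\{j:N_{s-1}<j\le N_s\}$. $D_{k,\beta,L}$ is the diagonal matrix with $j$-th entry $e^{-2\pi ik\beta_s}$ for $j\in B_s$. $\dot W$ is $L$-admissible if it is real symmetric and (1) $\dot W_{ij}\ge0$ for $i\ne j$, $\sum_j\dot W_{ij}=0$ for all $i$; (2) $\dot W$ has $N$ distinct eigenvalues; (3) each $\hat W_s=(\dot W_{jk})_{j,k\in B_s}$ has $L_s$ distinct eigenvalues. $\hat W_L$ is block diagonal with blocks $\hat W_1,\dots,\hat W_S$. $\Gamma=\{\beta\in\mathbb R^S: e^{-2\pi ik\beta_{s_1}}\neq e^{-2\pi ik\beta_{s_2}}\text{ for all }k\ne0,\ s_1\ne s_2\}$. For $v\in\mathbb C^N$, $(v)_j$ is its $j$-th entry. *)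

From Stdlib Require Import Reals Arith.
From Coquelicot Require Import Coquelicot.
Open Scope R_scope.

(* Indices are 0-based: matrix/vector indices i in {0,..,N-1},
   block indices s in {0,..,S-1}. Vectors are functions nat -> C,
   matrices are functions nat -> nat -> C (only entries with indices < N matter). *)

Fixpoint csum (n : nat) (f : nat -> C) : C :=
  match n with O => 0%C | S m => Cplus (csum m f) (f m) end.
Fixpoint rsum (n : nat) (f : nat -> R) : R :=
  match n with O => 0 | S m => rsum m f + f m end.
Fixpoint nsum (n : nat) (f : nat -> nat) : nat :=
  match n with O => 0%nat | S m => (nsum m f + f m)%nat end.

Definition Nb (L : nat -> nat) (s : nat) : nat := nsum s L.
Definition inB (L : nat -> nat) (s j : nat) : Prop := (Nb L s <= j < Nb L (S s))%nat.
Definition inBb (L : nat -> nat) (s j : nat) : bool :=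
  andb (Nat.leb (Nb L s) j) (Nat.ltb j (Nb L (S s))).

Definition bandwidth (S N : nat) (L : nat -> nat) : Prop :=
  (forall s, (s < S)%nat -> (0 < L s)%nat) /\ Nb L S = N.

Definition phase (k b : R) : C := (cos (2 * PI * k * b), - sin (2 * PI * k * b)).

Definition mmul (n : nat) (A B : nat -> nat -> C) : nat -> nat -> C :=
  fun i j => csum n (fun m => Cmult (A i m) (B m j)).
Definition mvec (n : nat) (A : nat -> nat -> C) (v : nat -> C) : nat -> C :=
  fun i => csum n (fun m => Cmult (A i m) (v m)).
Definition rmat (A : nat -> nat -> R) : nat -> nat -> C := fun i j => RtoC (A i j).

Definition Dmat (S : nat) (L : nat -> nat) (k : R) (beta : nat -> R) : nat -> nat -> C :=
  fun i j => if Nat.eqb i j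
             then csum S (fun s => if inBb L s i then phase k (beta s) else 0%C)
             else 0%C.

Definition Weps (Wd : nat -> nat -> R) (eps : R) : nat -> nat -> R :=
  fun i j => (if Nat.eqb i j then 1 else 0) + eps * Wd i j.

Definition What (S : nat) (L : nat -> nat) (Wd : nat -> nat -> R) : nat -> nat -> R :=
  fun i j => rsum S (fun s => if andb (inBb L s i) (inBb L s j) then Wd i j else 0).

Definition has_distinct_eigs (n : nat) (A : nat -> nat -> R) : Prop :=
  exists lam : nat -> R,
    (forall a b, (a < n)%nat -> (b < n)%nat -> lam a = lam b -> a = b) /\
    forall a, (a < n)%nat ->
      exists v : nat -> R, (exists i, (i < n)%nat /\ v i <> 0) /\
        forall i, (i < n)%nat -> rsum n (fun m => A i m * v m) = lam a * v i.

Definition admissible (S N : nat) (L : nat -> nat) (Wd : nat -> nat -> R) : Prop :=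
  (forall i j, (i < N)%nat -> (j < N)%nat -> Wd i j = Wd j i) /\
  (forall i j, (i < N)%nat -> (j < N)%nat -> i <> j -> 0 <= Wd i j) /\
  (forall i, (i < N)%nat -> rsum N (fun j => Wd i j) = 0) /\
  has_distinct_eigs N Wd /\
  (forall s, (s < S)%nat ->
     has_distinct_eigs (L s) (fun i j => Wd (Nb L s + i)%nat (Nb L s + j)%nat)).

Definition inGamma (S : nat) (beta : nat -> R) : Prop :=
  forall (k : Z), k <> 0%Z -> forall s1 s2, (s1 < S)%nat -> (s2 < S)%nat -> s1 <> s2 ->
    phase (IZR k) (beta s1) <> phase (IZR k) (beta s2).

Definition unit_eigvec (N : nat) (A : nat -> nat -> C) (lam : C) (v : nat -> C) : Prop :=
  rsum N (fun i => (Cmod (v i))^2) = 1 /\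
  forall i, (i < N)%nat -> mvec N A v i = Cmult lam (v i).

(* Row j of the eigenvalue equation for D_beta W_eps reads
   d_j (f_j + eps (Wdot f)_j) = lambda f_j, with d_j = e^{-2 pi i k beta_{s_j}}.
   Hence f_j / eps = d_j (Wdot f)_j / (lambda - d_j).  As eps -> 0, lambda tends
   to d_l, which differs from d_j because beta is in Gamma and s_l <> s_j, so the
   quotient converges to d_j (Wdot f^(l))_j / (d_l - d_j) = (D_beta Wdot f^(l))_j / (d_l - d_j).
   In particular f_j = eps * (f_j / eps) tends to 0, so (f^(l))_j = 0 and both
   difference quotients of the statement coincide. *)

From Stdlib Require Import Reals Arith Lia Lra.
From Coquelicot Require Import Coquelicot.
Open Scope R_scope.

Section ComplexLimits.

Context {T : Type} {F : (T -> Prop) -> Prop} {FF : Filter F}.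

(* [C] carries the product uniform structure of [R * R], while the library's limit
   rules for [mult] are stated for the [Cmod]-ball structure of [C_AbsRing]. *)
Lemma filterlim_C_AbsRing (g : T -> C) (a : C) :
  filterlim g F (locally a) <-> filterlim g F (@locally (AbsRing_UniformSpace C_AbsRing) a).
Proof. split; intros H P HP; apply H, locally_C, HP. Qed.

Lemma filterlim_Cmult (g h : T -> C) (a b : C) :
  filterlim g F (locally a) -> filterlim h F (locally b) ->
  filterlim (fun t => (g t * h t)%C) F (locally (a * b)%C).
Proof.
  intros Hg%filterlim_C_AbsRing Hh%filterlim_C_AbsRing. apply filterlim_C_AbsRing.
  eapply filterlim_comp_2; [exact Hg | exact Hh | apply (@filterlim_mult C_AbsRing)].
Qed.

Lemma filterlim_Cminus (g h : T -> C) (a b : C) :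
  filterlim g F (locally a) -> filterlim h F (locally b) ->
  filterlim (fun t => (g t - h t)%C) F (locally (a - b)%C).
Proof.
  intros Hg Hh.
  apply (filterlim_comp_2 (G := locally a) (H := locally (opp b))
           g (fun t => opp (h t)) (fun x y : C_NormedModule => plus x y) Hg).
  - eapply filterlim_comp; [exact Hh | apply (@filterlim_opp C_AbsRing C_NormedModule)].
  - apply (@filterlim_plus C_AbsRing C_NormedModule).
Qed.

Lemma filterlim_Cmod_lt (g : T -> C) (a : C) (r : R) :
  0 < r -> filterlim g F (locally a) -> F (fun t => Cmod (g t - a) < r).
Proof.
  intros Hr Hg.
  exact (proj1 (filterlim_locally_ball_norm (K := C_AbsRing) (U := C_NormedModule) g a)
           Hg (mkposreal r Hr)).
Qed.

Lemma filterlim_Cmod_lt_intro (g : T -> C) (a : C) :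
  (forall r, 0 < r -> F (fun t => Cmod (g t - a) < r)) -> filterlim g F (locally a).
Proof.
  intros H.
  apply (filterlim_locally_ball_norm (K := C_AbsRing) (U := C_NormedModule)).
  intros eps. exact (H eps (cond_pos eps)).
Qed.

Lemma filterlim_Cinv (g : T -> C) (a : C) :
  a <> 0%C -> filterlim g F (locally a) -> filterlim (fun t => / g t)%C F (locally (/ a)%C).
Proof.
  intros Ha Hg. apply filterlim_Cmod_lt_intro. intros eps Heps.
  pose proof (proj1 (Cmod_gt_0 a) Ha) as Hm. set (m := Cmod a) in *.
  assert (Hd : 0 < Rmin (m / 2) (eps * m * m / 2)).
  { apply Rmin_glb_lt; [lra|]. pose proof (Rmult_lt_0_compat _ _ Heps Hm). nra. }
  eapply filter_imp; [|exact (filterlim_Cmod_lt g a _ Hd Hg)]. intros t Ht.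
  assert (Ht1 := Rlt_le_trans _ _ _ Ht (Rmin_l _ _)).
  assert (Ht2 := Rlt_le_trans _ _ _ Ht (Rmin_r _ _)).
  assert (Hgt : m / 2 < Cmod (g t)).
  { pose proof (Cmod_triangle (g t) (a - g t)) as Htri.
    replace (g t + (a - g t))%C with a in Htri by ring.
    replace (a - g t)%C with (- (g t - a))%C in Htri by ring.
    rewrite Cmod_opp in Htri. fold m in Htri. lra. }
  assert (Hg0 : g t <> 0%C) by (intro E; rewrite E, Cmod_0 in Hgt; lra).
  replace (/ g t - / a)%C with ((a - g t) / (g t * a))%C by (field; auto).
  rewrite Cmod_div by (apply Cmult_neq_0; auto).
  rewrite Cmod_mult. replace (a - g t)%C with (- (g t - a))%C by ring.
  rewrite Cmod_opp. fold m.
  apply Rlt_div_l; [nra|].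
  pose proof (Rmult_lt_0_compat _ _ Heps Hm).
  assert (eps * m * (m / 2) < eps * m * Cmod (g t)) by (apply Rmult_lt_compat_l; auto).
  nra.
Qed.

Lemma filterlim_csum (h : T -> nat -> C) (h0 : nat -> C) (n : nat) :
  (forall m, (m < n)%nat -> filterlim (fun t => h t m) F (locally (h0 m))) ->
  filterlim (fun t => csum n (h t)) F (locally (csum n h0)).
Proof.
  induction n as [|n IH]; intros H; simpl.
  - apply filterlim_const.
  - eapply filterlim_comp_2.
    + apply IH. intros m Hm. apply H. lia.
    + apply H. lia.
    + apply (@filterlim_plus C_AbsRing C_NormedModule).
Qed.

End ComplexLimits.

Lemma at_right_0_interval (r : R) : 0 < r -> at_right 0 (fun e => 0 < e < r).
Proof.
  intros Hr. exists (mkposreal r Hr). intros y Hy Hpos.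
  change (Rabs (y - 0) < r) in Hy. apply Rabs_def2 in Hy. simpl in Hy. lra.
Qed.

Lemma filterlim_RtoC_at_right_0 : filterlim RtoC (at_right 0) (locally (RtoC 0)).
Proof.
  apply filterlim_Cmod_lt_intro. intros r Hr.
  eapply filter_imp; [|exact (at_right_0_interval r Hr)]. intros e He.
  rewrite <- RtoC_minus, Cmod_R, Rabs_pos_eq; lra.
Qed.

Lemma filterlim_eq0_of_div_eps (x : R -> C) (x0 q : C) :
  filterlim (fun e => x e / RtoC e)%C (at_right 0) (locally q) ->
  filterlim x (at_right 0) (locally x0) -> x0 = 0%C.
Proof.
  intros Hq Hx.
  assert (Hx' : filterlim x (at_right 0) (locally (RtoC 0 * q)%C)).
  { eapply filterlim_ext_loc; [|exact (filterlim_Cmult _ _ _ _ filterlim_RtoC_at_right_0 Hq)].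
    eapply filter_imp; [|exact (at_right_0_interval 1 Rlt_0_1)]. intros e He.
    field. intros E%(f_equal fst). simpl in E. lra. }
  rewrite (filterlim_locally_unique (K := C_AbsRing) (V := C_NormedModule) _ _ _ Hx Hx').
  ring.
Qed.

Lemma eigen_row_quotient_limit (d dl w0 : C) (lam x w : R -> C) (gamma : R) :
  dl <> d -> 0 < gamma ->
  (forall e, 0 < e < gamma -> (d * (x e + RtoC e * w e))%C = (lam e * x e)%C) ->
  filterlim lam (at_right 0) (locally dl) ->
  filterlim w (at_right 0) (locally w0) ->
  filterlim (fun e => x e / RtoC e)%C (at_right 0) (locally (d * w0 / (dl - d)))%C.
Proof.
  intros Hne Hgam Hrow Hlam Hw.
  assert (Hgap : (dl - d)%C <> 0%C) by (apply Cminus_eq_contra; exact Hne).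
  assert (Hlamd := filterlim_Cminus _ _ _ _ Hlam (filterlim_const d)).
  assert (Haway : at_right 0 (fun e => lam e - d <> 0)%C).
  { apply (filter_imp (fun e => Cmod ((lam e - d) - (dl - d)) < Cmod (dl - d)))%C.
    - intros e He E. rewrite E in He.
      replace (0 - (dl - d))%C with (- (dl - d))%C in He by ring.
      rewrite Cmod_opp in He. lra.
    - apply filterlim_Cmod_lt; [apply Cmod_gt_0|]; assumption. }
  eapply filterlim_ext_loc.
  2: { apply filterlim_Cmult; [apply filterlim_Cmult; [apply filterlim_const|exact Hw]|].
       exact (filterlim_Cinv _ _ Hgap Hlamd). }
  generalize (filter_and _ _ (at_right_0_interval gamma Hgam) Haway). apply filter_imp.
  intros e [He Hlame].
  assert (Hx : (x e * (lam e - d))%C = (RtoC e * (d * w e))%C).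
  { transitivity (lam e * x e - d * x e)%C; [ring|]. rewrite <- (Hrow e He). ring. }
  assert (He0 : RtoC e <> 0%C) by (intros E%(f_equal fst); simpl in E; lra).
  replace (x e) with (x e * (lam e - d) / (lam e - d))%C by (field; exact Hlame).
  rewrite Hx. field. split; assumption.
Qed.

Lemma csum_ext (g h : nat -> C) (n : nat) :
  (forall m, (m < n)%nat -> g m = h m) -> csum n g = csum n h.
Proof.
  induction n as [|n IH]; intros H; simpl; [reflexivity|].
  rewrite IH by (intros; apply H; lia). rewrite H by lia. reflexivity.
Qed.

Lemma csum_plus (g h : nat -> C) (n : nat) :
  csum n (fun m => g m + h m)%C = (csum n g + csum n h)%C.
Proof. induction n as [|n IH]; simpl; [ring|]. rewrite IH. ring. Qed.

Lemma csum_scal (c : C) (g : nat -> C) (n : nat) :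
  csum n (fun m => c * g m)%C = (c * csum n g)%C.
Proof. induction n as [|n IH]; simpl; [ring|]. rewrite IH. ring. Qed.

Lemma csum_eq0 (g : nat -> C) (n : nat) :
  (forall m, (m < n)%nat -> g m = 0%C) -> csum n g = 0%C.
Proof.
  induction n as [|n IH]; intros H; simpl; [reflexivity|].
  rewrite IH by (intros; apply H; lia). rewrite H by lia. ring.
Qed.

Lemma csum_delta (g : nat -> C) (n j : nat) :
  (j < n)%nat -> (forall m, m <> j -> g m = 0%C) -> csum n g = g j.
Proof.
  induction n as [|n IH]; intros Hj Hg; [lia|]. simpl.
  destruct (Nat.eq_dec j n) as [->|Hne].
  - rewrite csum_eq0 by (intros m Hm; apply Hg; lia). ring.
  - rewrite (IH ltac:(lia) Hg), (Hg n) by lia. ring.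
Qed.

Lemma Nb_mono (L : nat -> nat) (s t : nat) : (s <= t)%nat -> (Nb L s <= Nb L t)%nat.
Proof. unfold Nb. induction 1; simpl; lia. Qed.

Lemma inB_unique (L : nat -> nat) (s t j : nat) : inB L s j -> inB L t j -> s = t.
Proof.
  unfold inB. intros Hs Ht.
  destruct (Nat.lt_total s t) as [Hlt|[->|Hlt]]; [|reflexivity|];
    [pose proof (Nb_mono L (S s) t Hlt) | pose proof (Nb_mono L (S t) s Hlt)]; lia.
Qed.

Lemma inBb_inB (L : nat -> nat) (s j : nat) : inBb L s j = true <-> inB L s j.
Proof.
  unfold inBb, inB. rewrite Bool.andb_true_iff, Nat.leb_le, Nat.ltb_lt. reflexivity.
Qed.

Lemma Dmat_diag (S : nat) (L : nat -> nat) (k : R) (beta : nat -> R) (j s : nat) :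
  (s < S)%nat -> inB L s j -> Dmat S L k beta j j = phase k (beta s).
Proof.
  intros Hs Hj. unfold Dmat. rewrite Nat.eqb_refl, (csum_delta _ _ s Hs).
  - apply inBb_inB in Hj. rewrite Hj. reflexivity.
  - intros t Ht. destruct (inBb L t j) eqn:Htj; [|reflexivity].
    apply inBb_inB in Htj. destruct Ht. exact (inB_unique L t s j Htj Hj).
Qed.

Lemma mvec_Dmat_mmul (S N : nat) (L : nat -> nat) (k : R) (beta : nat -> R)
    (A : nat -> nat -> C) (u : nat -> C) (j : nat) :
  (j < N)%nat ->
  mvec N (mmul N (Dmat S L k beta) A) u j = (Dmat S L k beta j j * mvec N A u j)%C.
Proof.
  intros Hj. unfold mvec, mmul. rewrite <- csum_scal. apply csum_ext. intros m _.
  rewrite (csum_delta _ _ j Hj); [ring|].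
  intros i Hi. unfold Dmat. rewrite (proj2 (Nat.eqb_neq j i)) by auto. ring.
Qed.

Lemma mvec_rmat_Weps (N : nat) (Wd : nat -> nat -> R) (eps : R) (u : nat -> C) (j : nat) :
  (j < N)%nat ->
  mvec N (rmat (Weps Wd eps)) u j = (u j + RtoC eps * mvec N (rmat Wd) u j)%C.
Proof.
  intros Hj. unfold mvec.
  transitivity (csum N (fun m => (if Nat.eqb j m then u m else 0)
                                 + RtoC eps * (rmat Wd j m * u m))%C).
  - apply csum_ext. intros m _.
    unfold rmat, Weps. rewrite RtoC_plus, RtoC_mult. destruct (Nat.eqb j m); ring.
  - rewrite csum_plus, csum_scal, (csum_delta _ N j Hj), Nat.eqb_refl; [reflexivity|].
    intros m Hm. rewrite (proj2 (Nat.eqb_neq j m)) by auto. reflexivity.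
Qed.

Lemma inGamma_phase_neq (S : nat) (beta : nat -> R) (k s t : nat) :
  inGamma S beta -> (0 < k)%nat -> (s < S)%nat -> (t < S)%nat -> s <> t ->
  phase (INR k) (beta s) <> phase (INR k) (beta t).
Proof. intros HG Hk Hs Ht Hst. rewrite INR_IZR_INZ. apply HG; auto. lia. Qed.

Theorem proposition4p7
  (S N : nat) (L : nat -> nat) (Wd : nat -> nat -> R) (k : nat) (beta : nat -> R)
  (gamma : R) (f : R -> nat -> C) (lam : R -> C) (f0 : nat -> C) (l sl : nat) :
  (1 < S)%nat -> (S <= N)%nat -> bandwidth S N L -> admissible S N L Wd ->
  (0 < k)%nat -> inGamma S beta ->
  (l < N)%nat -> (sl < S)%nat -> inB L sl l ->
  0 < gamma ->
  (forall eps, 0 < eps < gamma ->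
     unit_eigvec N (mmul N (Dmat S L (INR k) beta) (rmat (Weps Wd eps))) (lam eps) (f eps)) ->
  filterlim lam (at_right 0) (locally (phase (INR k) (beta sl))) ->
  (forall i, (i < N)%nat -> filterlim (fun eps => f eps i) (at_right 0) (locally (f0 i))) ->
  (exists mu : C, unit_eigvec N (mmul N (Dmat S L (INR k) beta) (rmat (What S L Wd))) mu f0) ->
  forall j sj, (j < N)%nat -> ~ inB L sl j -> (sj < S)%nat -> inB L sj j ->
    let v := Cmult (Cinv (Cminus (phase (INR k) (beta sl)) (phase (INR k) (beta sj))))
                   (mvec N (mmul N (Dmat S L (INR k) beta) (rmat Wd)) f0 j) in
    filterlim (fun eps => Cdiv (Cminus (f eps j) (f0 j)) (RtoC eps)) (at_right 0) (locally v) /\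
    filterlim (fun eps => Cdiv (f eps j) (RtoC eps)) (at_right 0) (locally v).
Proof.
  intros _ _ _ _ Hk HG _ Hsl _ Hgam Heig Hlam Hf _ j sj Hj HnBj Hsj HBj v.
  assert (HDj : Dmat S L (INR k) beta j j = phase (INR k) (beta sj)) by exact (Dmat_diag _ _ _ _ _ _ Hsj HBj).
  assert (Hne : phase (INR k) (beta sl) <> phase (INR k) (beta sj)).
  { apply inGamma_phase_neq with S; auto. intros ->. contradiction. }
  assert (Hrow : forall e, 0 < e < gamma ->
            (phase (INR k) (beta sj) * (f e j + RtoC e * mvec N (rmat Wd) (f e) j))%C
            = (lam e * f e j)%C).
  { intros e He. rewrite <- HDj, <- mvec_rmat_Weps, <- mvec_Dmat_mmul by exact Hj.
    exact (proj2 (Heig e He) j Hj). }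
  assert (HWf : filterlim (fun e => mvec N (rmat Wd) (f e) j) (at_right 0)
                  (locally (mvec N (rmat Wd) f0 j))).
  { apply filterlim_csum. intros m Hm.
    apply filterlim_Cmult; [apply filterlim_const | exact (Hf m Hm)]. }
  assert (Hquot := eigen_row_quotient_limit _ _ _ _ _ _ _ Hne Hgam Hrow Hlam HWf).
  replace (_ / _)%C with v in Hquot
    by (unfold v; rewrite mvec_Dmat_mmul, HDj by exact Hj; field;
        apply Cminus_eq_contra, Hne).
  assert (Hf0j : f0 j = 0%C) by exact (filterlim_eq0_of_div_eps _ _ _ Hquot (Hf j Hj)).
  split; [|exact Hquot].
  eapply filterlim_ext; [|exact Hquot]. intros e. rewrite Hf0j. unfold Cdiv. f_equal. ring.
Qed.
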